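(* Let $\mathcal{D}$ be an $S(2,k,v)$ with $v>k^3-2k^2+2k$. Then $G_0=0$-$\mathrm{BIG}(\mathcal{D})$ is not silver.
   Context: A Steiner $2$-design $S(2,k,v)$ ($2<k<v$) is a pair $(V,\mathcal{B})$ with $|V|=v$ and $\mathcal{B}$ a collection of $k$-subsets of $V$ (blocks) such that every $2$-subset of $V$ lies in exactly one block. The $0$-block intersection graph $0$-$\mathrm{BIG}(\mathcal{D})$ has the blocks as vertices, two blocks adjacent iff they are disjoint; it is a regular graph. An $\alpha$-set of a graph is a maximum independent set. Let $G$ be an $r$-regular graph and $c$ a proper $(r+1)$-coloring of $G$. A vertex $x$ is rainbow with respect to $c$ if every one of the $r+1$ colors appears on $N[x]=N(x)\cup\{x\}$. Given an $\alpha$-set $I$, $c$ is silver with respect to $I$ if every $x\in I$ is rainbow; $G$ is silver if it admits a silver coloring with respect to some $\alpha$-set. *)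

From mathcomp Require Import all_boot.
Set Implicit Arguments. Unset Strict Implicit. Unset Printing Implicit Defensive.

(* Steiner 2-design S(2,k,v) on point set V (v = #|V|) with block set B *)
Definition steiner2 (V : finType) (k : nat) (B : {set {set V}}) : Prop :=
  [/\ 2 < k, k < #|V|,
      (forall b, b \in B -> #|b| = k) &
      (forall x y : V, x != y ->
         exists! b : {set V}, [&& b \in B, x \in b & y \in b])].

Definition zeroBIG_adj (V : finType) : rel {set V} :=
  fun b1 b2 => [disjoint b1 & b2].

Section Graph.
Variables (T : finType) (S : {set T}) (adj : rel T).

Definition nbhd (x : T) : {set T} := [set y in S | adj x y].

Definition closed_nbhd (x : T) : {set T} := x |: nbhd x.

Definition regular (r : nat) : Prop := forall x, x \in S -> #|nbhd x| = r.

Definition independent (I : {set T}) : Prop :=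
  I \subset S /\ (forall x y, x \in I -> y \in I -> ~~ adj x y).

Definition alpha_set (I : {set T}) : Prop :=
  independent I /\ (forall J, independent J -> #|J| <= #|I|).

Definition proper_coloring (m : nat) (c : T -> 'I_m) : Prop :=
  forall x y, x \in S -> y \in S -> adj x y -> c x != c y.

Definition rainbow (m : nat) (c : T -> 'I_m) (x : T) : Prop :=
  forall i : 'I_m, exists2 y, y \in closed_nbhd x & c y = i.

Definition silver_wrt (r : nat) (I : {set T}) : Prop :=
  exists c : T -> 'I_(r.+1),
    proper_coloring c /\ (forall x, x \in I -> rainbow c x).

Definition silver : Prop :=
  exists r, regular r /\ exists I, alpha_set I /\ silver_wrt r I.
End Graph.

(* Stars [star p] (the blocks through a point p) are independent in the
   0-BIG and have size R = (v - 1)/(k - 1) > k(k - 1) + 1 when v is large;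
   an intersecting family of more than k(k - 1) + 1 blocks lies in a star,
   so every alpha-set is a star.  In a silver (r + 1)-coloring each color
   class is intersecting and dominates that star, which forces it to have at
   least three blocks; hence b >= 3(r + 1).  Counting the blocks meeting a
   fixed block gives b <= 1 + r + k(R - 1), and together with bk = vR this
   yields 2v < 3k^2, contradicting v > k^3 - 2k^2 + 2k. *)
From mathcomp Require Import all_boot zify.
Set Implicit Arguments. Unset Strict Implicit. Unset Printing Implicit Defensive.

Lemma disjointPn (T : finType) (A B : {set T}) :
  reflect (exists2 x, x \in A & x \in B) (~~ [disjoint A & B]).
Proof.
rewrite -setI_eq0; apply: (iffP (set0Pn _)) => [[x]|[x xA xB]].
  by rewrite inE => /andP[]; exists x.
by exists x; rewrite inE xA xB.
Qed.

Lemma card_bigcup_leq_sum (T I : finType) (P : {pred I}) (F : I -> {set T}) :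
  #|\bigcup_(i in P) F i| <= \sum_(i in P) #|F i|.
Proof.
apply: (big_ind2 (fun (X : {set T}) n => #|X| <= n)) => //; first by rewrite cards0.
by move=> X1 n1 X2 n2 h1 h2; apply: leq_trans (leq_card_setU X1 X2) (leq_add h1 h2).
Qed.

Lemma card_sum_fibers (T : finType) (m : nat) (A : {set T}) (c : T -> 'I_m) :
  #|A| = \sum_(i < m) #|[set y in A | c y == i]|.
Proof.
rewrite -sum1_card (partition_big c predT) //=.
by apply: eq_bigr => i _; rewrite -sum1_card; apply: eq_bigl => y; rewrite inE.
Qed.

Lemma double_count_incidences (T : finType) (F : {set {set T}}) (S : {set T}) :
  \sum_(b in F) #|b :&: S| = \sum_(z in S) #|[set b in F | z \in b]|.
Proof.
have card_sum (X Y : {set T}) : #|X :&: Y| = \sum_(z in Y) (z \in X : nat).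
  rewrite -sum1_card [LHS]big_mkcond [RHS]big_mkcond /=.
  by apply: eq_bigr => z _; rewrite inE; case: (z \in X); case: (z \in Y).
under eq_bigr do rewrite card_sum.
rewrite exchange_big; apply: eq_bigr => z _.
rewrite -sum1_card big_mkcond [RHS]big_mkcond /=.
by apply: eq_bigr => b _; rewrite inE; case: (b \in F); case: (z \in b).
Qed.

Lemma card_le2_subset2 (T : finType) (C : {set T}) y2 :
  y2 \in C -> #|C| <= 2 -> exists2 y1, y1 \in C & C \subset [set y1; y2].
Proof.
move=> y2C C2; case: (set_0Vmem (C :\ y2)) => [C0 | [y1 y1C]].
  exists y2 => //; apply/subsetP => y yC; rewrite !inE orbb.
  apply: contraT => yy2; have : y \in C :\ y2 by rewrite !inE yy2 yC.
  by rewrite C0 inE.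
have: #|C :\ y2| <= 1 by move: C2; rewrite (cardsD1 y2 C) y2C add1n ltnS.
move/card_le1P/(_ y1 y1C) => eqC.
exists y1; first by move: y1C; rewrite inE => /andP[].
apply/subsetP => y yC; rewrite !inE.
case: (eqVneq y y2) => [_|yy2]; first by rewrite orbT.
by have := eqC y; rewrite !inE yy2 yC ?orbF => <-.
Qed.

Definition intersecting (T : finType) (F : {set {set T}}) :=
  forall x y, x \in F -> y \in F -> ~~ [disjoint x & y].

Lemma replication_lower_bound (k R v : nat) :
  2 < k -> R * (k - 1) = v - 1 -> k ^ 3 - 2 * k ^ 2 + 2 * k < v ->
  k * (k - 1) + 1 < R.
Proof.
move=> k_gt2 eqR v_big.
have expand : (k * (k - 1) + 1) * (k - 1) = k ^ 3 - 2 * k ^ 2 + 2 * k - 1.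
  by rewrite !expnS expn0; nia.
by rewrite -(ltn_pmul2r (_ : 0 < k - 1)) ?expand ?eqR; lia.
Qed.

Lemma steiner_count_bound (k R v b r : nat) :
  2 < k -> R * (k - 1) = v - 1 -> b * k = v * R ->
  3 * r.+1 <= b -> b <= 1 + r + k * (R - 1) -> v <= k ^ 3 - 2 * k ^ 2 + 2 * k.
Proof.
move=> k_gt2 eqR eqb b_ge b_le.
have R_gt0 : 0 < R.
  rewrite lt0n; apply/negP => /eqP R0.
  by move: eqb; rewrite R0 muln0 => /eqP; rewrite muln_eq0; lia.
have two_b : 2 * b < 3 * (k * R).
  have : k * (R - 1) < k * R by rewrite ltn_pmul2l; lia.
  lia.
have two_v : 2 * v < 3 * k ^ 2.
  rewrite -(ltn_pmul2r R_gt0).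
  have : 2 * b * k < 3 * (k * R) * k by rewrite ltn_pmul2r; lia.
  rewrite -mulnA eqb expnS expn1; lia.
have : 3 * k ^ 2 <= 2 * (k ^ 3 - 2 * k ^ 2 + 2 * k).
  by clear -k_gt2; rewrite !expnS expn0; nia.
lia.
Qed.

Section SteinerSystem.
Variables (V : finType) (k : nat) (B : {set {set V}}).
Hypothesis design : steiner2 k B.

Let k_gt2 : 2 < k. Proof. by case: design. Qed.

Let V_gt0 : 0 < #|V|. Proof. by case: design => _ kV _ _; apply: leq_ltn_trans kV. Qed.

Let card_block b : b \in B -> #|b| = k. Proof. by case: design => _ _ /(_ b). Qed.

Lemma block_through x y : x != y -> exists b, [&& b \in B, x \in b & y \in b].
Proof. by case: design => _ _ _ /(_ x y) uniq /uniq [b [bxy _]]; exists b. Qed.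

Lemma block_unique x y b1 b2 : x != y -> b1 \in B -> b2 \in B ->
  x \in b1 -> y \in b1 -> x \in b2 -> y \in b2 -> b1 = b2.
Proof.
case: design => _ _ _ /(_ x y) uniq /uniq [b [_ eqb]] b1B b2B x1 y1 x2 y2.
by rewrite -(eqb b1) ?b1B ?x1 ?y1 // -(eqb b2) ?b2B ?x2 ?y2.
Qed.

Definition star (p : V) := [set b in B | p \in b].

Definition replication := (#|V| - 1) %/ (k - 1).

Lemma card_star_mul p : #|star p| * (k - 1) = #|V| - 1.
Proof.
have := double_count_incidences (star p) (~: [set p]).
have -> : \sum_(b in star p) #|b :&: ~: [set p]| = \sum_(b in star p) (k - 1).
  apply: eq_bigr => b; rewrite inE => /andP[bB pb].
  by rewrite -setDE -(card_block bB) (cardsD1 p b) pb subn1.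
rewrite sum_nat_const => ->.
rewrite subn1 -(cardsC1 p) -sum1_card; apply: eq_bigr => z; rewrite !inE => zp.
have pz : p != z by rewrite eq_sym.
have [b0 /and3P[b0B pb0 zb0]] := block_through pz.
suff -> : [set b in star p | z \in b] = [set b0] by rewrite cards1.
apply/setP => b; rewrite !inE; apply/idP/eqP => [/andP[/andP[bB pb] zb] | ->].
  exact: block_unique pz bB b0B pb zb pb0 zb0.
by rewrite b0B pb0 zb0.
Qed.

Lemma card_star p : #|star p| = replication.
Proof. by rewrite /replication -(card_star_mul p) mulnK // subn_gt0 ltnW. Qed.

Lemma replication_mul : replication * (k - 1) = #|V| - 1.
Proof. by have [p _] := card_gt0P V_gt0; rewrite -(card_star p) card_star_mul. Qed.

Lemma card_blocks_mul : #|B| * k = #|V| * replication.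
Proof.
have := double_count_incidences B [set: V].
have -> : \sum_(b in B) #|b :&: [set: V]| = \sum_(b in B) k.
  by apply: eq_bigr => b bB; rewrite setIT card_block.
rewrite sum_nat_const => ->.
under eq_bigr => z _ do rewrite -[[set b in B | z \in b]]/(star z) card_star.
by rewrite sum_nat_const cardsT.
Qed.

(* Blocks of F through q meet a block D of F missing q in distinct points. *)
Lemma card_intersecting_through (F : {set {set V}}) q (D : {set V}) :
  F \subset B -> intersecting F -> D \in F -> q \notin D ->
  #|[set y in F | q \in y]| <= k.
Proof.
move=> FB Fint DF qD; have DB := subsetP FB D DF.
pose f y := odflt q [pick z in y :&: D].
have fP y : y \in F -> f y \in y :&: D.
  move=> yF; rewrite /f; case: pickP => [z //|none].
  by have /disjointPn[z zy zD] := Fint y D yF DF; have := none z; rewrite inE zy zD.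
rewrite -(card_block DB) -(card_in_imset (f := f)); last first.
  move=> y1 y2; rewrite !inE => /andP[y1F qy1] /andP[y2F qy2] f12.
  have := fP y1 y1F; have := fP y2 y2F; rewrite -f12 !inE => /andP[zy2 zD] /andP[zy1 _].
  have qz : q != f y1 by apply: contraNneq qD => ->.
  exact: block_unique qz (subsetP FB _ y1F) (subsetP FB _ y2F) qy1 zy1 qy2 zy2.
apply/subset_leq_card/subsetP => _ /imsetP[y + ->]; rewrite inE => /andP[yF _].
by have := fP y yF; rewrite inE => /andP[].
Qed.

Lemma intersecting_sub_star (F : {set {set V}}) : F \subset B -> intersecting F ->
  k * (k - 1) + 1 < #|F| -> exists q, F \subset star q.
Proof.
move=> FB Fint F_big.
case: (boolP [exists q, F \subset star q]) => [/existsP // | no_star].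
have [C CF] : exists C, C \in F by apply/set0Pn; rewrite -card_gt0; case: #|F| F_big.
have through_le q : q \in C -> #|[set y in F | q \in y] :\ C| <= k - 1.
  move=> qC; have /subsetPn[D DF qD] : ~~ (F \subset star q).
    by move: no_star; rewrite negb_exists => /forallP.
  rewrite inE (subsetP FB D DF) /= in qD.
  have := card_intersecting_through FB Fint DF qD.
  by rewrite (cardsD1 C) inE CF qC add1n; lia.
have F_sub : F \subset C |: \bigcup_(q in C) ([set y in F | q \in y] :\ C).
  apply/subsetP => y yF; rewrite !inE; case: eqVneq => [//| yC] /=.
  have /disjointPn[q qy qC] := Fint y C yF CF.
  by apply/bigcupP; exists q; rewrite // !inE yC yF qy.
have : #|F| <= 1 + k * (k - 1).
  apply: leq_trans (subset_leq_card F_sub) _; rewrite cardsU1.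
  apply: leq_add; first by case: (_ \notin _).
  apply: leq_trans (card_bigcup_leq_sum _ _) _.
  by rewrite -{1}(card_block (subsetP FB C CF)) -sum_nat_const leq_sum.
by rewrite addnC leqNgt F_big.
Qed.

Lemma star_block_meeting p (y1 y2 : {set V}) : y1 \in B -> y2 \in B ->
  ~~ [disjoint y1 & y2] -> p \notin y2 ->
  exists x, [/\ x \in star p, x != y1, x != y2,
                ~~ [disjoint x & y1] & ~~ [disjoint x & y2]].
Proof.
move=> y1B y2B /disjointPn[q qy1 qy2] py2.
have ne_y2 (x : {set V}) : p \in x -> x != y2 by apply: contraTneq => ->.
case: (boolP (p \in y1)) => py1.
- have /subsetPn[z zy2 zy1] : ~~ (y2 \subset y1).
    apply: contraNN py2 => sub; suff -> : y2 = y1 by [].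
    by apply/eqP; rewrite eqEcard sub (card_block y1B) (card_block y2B) leqnn.
  have pz : p != z by apply: contraNneq py2 => ->.
  have [x /and3P[xB px zx]] := block_through pz.
  exists x; split; rewrite ?inE ?xB ?px ?ne_y2 //.
  + by apply: contraNneq zy1 => <-.
  + by apply/disjointPn; exists p.
  + by apply/disjointPn; exists z.
- have pq : p != q by apply: contraNneq py2 => ->.
  have [x /and3P[xB px qx]] := block_through pq.
  exists x; split; rewrite ?inE ?xB ?px ?ne_y2 //.
  + by apply: contraNneq py1 => <-.
  + by apply/disjointPn; exists q.
  + by apply/disjointPn; exists q.
Qed.

Lemma independent_star p : independent B (@zeroBIG_adj V) (star p).
Proof.
split; first by apply/subsetP => b; rewrite inE => /andP[].
by move=> x y; rewrite !inE => /andP[_ px] /andP[_ py]; apply/disjointPn; exists p.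
Qed.

Lemma alpha_set_star (I : {set {set V}}) : k * (k - 1) + 1 < replication ->
  alpha_set B (@zeroBIG_adj V) I -> exists q, I = star q.
Proof.
move=> R_big [[IB Iint] Imax].
have [p _] := card_gt0P V_gt0.
have := Imax _ (independent_star p); rewrite card_star => /(leq_trans R_big) I_big.
have [q Iq] := intersecting_sub_star IB Iint I_big.
exists q; apply/eqP; rewrite eqEcard Iq card_star.
by rewrite -(card_star p) (Imax _ (independent_star p)).
Qed.

(* If C has a block missing p and at most one other block, [star_block_meeting]
   yields a block of the star outside C meeting all of C. *)
Lemma dominating_intersecting_card p (C : {set {set V}}) :
  C \subset B -> intersecting C ->
  {in star p, forall x, exists2 y, y \in C & y \in closed_nbhd B (@zeroBIG_adj V) x} ->
  2 < replication -> 2 < #|C|.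
Proof.
move=> CB Cint dom R_gt2.
have undominated (x : {set V}) : x \in star p -> x \notin C ->
    {in C, forall y : {set V}, ~~ [disjoint x & y]} -> False.
  move=> xs xC meet; have [y yC] := dom x xs.
  rewrite /closed_nbhd /nbhd !inE /zeroBIG_adj => /orP[/eqP yx | /andP[_ d]].
    by rewrite -yx yC in xC.
  by have := meet y yC; rewrite d.
case: (boolP (C \subset star p)) => [Cp | /subsetPn[y2 y2C]].
  rewrite -(card_star p) in R_gt2; apply: leq_trans R_gt2 (subset_leq_card _).
  apply/subsetP => x xs; apply: contraT => xC; exfalso.
  apply: (undominated x xs xC) => y yC.
  move: xs (subsetP Cp y yC); rewrite !inE => /andP[_ px] /andP[_ py].
  by apply/disjointPn; exists p.
have y2B := subsetP CB y2 y2C; rewrite inE y2B /= => py2.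
rewrite ltnNge; apply/negP => C_le2.
have [y1 y1C C_sub] := card_le2_subset2 y2C C_le2.
have [x [xs xy1 xy2 m1 m2]] :=
  star_block_meeting (subsetP CB y1 y1C) y2B (Cint y1 y2 y1C y2C) py2.
have mem_C y : y \in C -> (y == y1) || (y == y2) by move/(subsetP C_sub); rewrite !inE.
apply: (undominated x xs).
  by apply/negP => /mem_C; rewrite (negbTE xy1) (negbTE xy2).
by move=> y /mem_C /orP[] /eqP ->.
Qed.

Lemma silver_color_class_card r q (c : {set V} -> 'I_r.+1) i :
  2 < replication -> proper_coloring B (@zeroBIG_adj V) c ->
  (forall x, x \in star q -> rainbow B (@zeroBIG_adj V) c x) ->
  2 < #|[set y in B | c y == i]|.
Proof.
move=> R_gt2 proper rainbow_star.
apply: (@dominating_intersecting_card q) => //.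
- by apply/subsetP => y; rewrite inE => /andP[].
- move=> y1 y2; rewrite !inE => /andP[y1B /eqP c1] /andP[y2B /eqP c2].
  by apply/negP => d; have := proper _ _ y1B y2B d; rewrite c1 c2 eqxx.
- move=> x xs; have [y yN cy] := rainbow_star x xs i.
  exists y => //; rewrite inE cy eqxx andbT.
  move: yN; rewrite /closed_nbhd /nbhd !inE => /orP[/eqP -> | /andP[] //].
  by move: xs; rewrite inE => /andP[].
Qed.

Lemma card_blocks_le_degree x : x \in B ->
  #|B| <= 1 + #|nbhd B (@zeroBIG_adj V) x| + k * (replication - 1).
Proof.
move=> xB; set N := nbhd B (@zeroBIG_adj V) x.
have B_sub : B \subset x |: (N :|: \bigcup_(q in x) (star q :\ x)).
  apply/subsetP => y yB; rewrite !inE yB /zeroBIG_adj /=.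
  case: eqVneq => [//| yx] /=.
  case: (boolP [disjoint x & y]) => [//| /disjointPn[q qx qy]] /=.
  by apply/bigcupP; exists q; rewrite // !inE yx yB qy.
apply: leq_trans (subset_leq_card B_sub) _; rewrite cardsU1 -addnA.
apply: leq_add; first by case: (_ \notin _).
apply: leq_trans (leq_card_setU _ _) (leq_add (leqnn _) _).
apply: leq_trans (card_bigcup_leq_sum _ _) _.
rewrite -{1}(card_block xB) -sum_nat_const; apply: leq_sum => q qx.
by rewrite -(card_star q) (cardsD1 x (star q)) inE xB qx add1n subn1.
Qed.

End SteinerSystem.

Theorem theorem7 (V : finType) (k : nat) (B : {set {set V}}) :
  steiner2 k B ->
  k ^ 3 - 2 * k ^ 2 + 2 * k < #|V| ->
  ~ silver B (@zeroBIG_adj V).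
Proof.
move=> design v_big [r [regular_r [I [alphaI [c [proper rainbowI]]]]]].
have [k_gt2 _ _ _] := design.
have R_big := replication_lower_bound k_gt2 (replication_mul design) v_big.
have R_gt2 : 2 < replication V k.
  by apply: leq_trans R_big; clear -k_gt2; nia.
have [q eqI] := alpha_set_star design R_big alphaI; subst I.
have B_ge : 3 * r.+1 <= #|B|.
  rewrite (card_sum_fibers B c); apply: (@leq_trans (\sum_(i < r.+1) 3)).
    by rewrite sum_nat_const card_ord mulnC.
  by apply: leq_sum => i _; apply: silver_color_class_card R_gt2 proper rainbowI.
have [x xs] : exists x, x \in star B q.
  by apply/card_gt0P; rewrite (card_star design); apply: ltnW (ltnW R_gt2).
have xB : x \in B by move: xs; rewrite inE => /andP[].
have := card_blocks_le_degree design xB; rewrite regular_r // => B_le.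
have := steiner_count_bound k_gt2 (replication_mul design)
  (card_blocks_mul design) B_ge B_le.
by rewrite leqNgt v_big.
Qed.
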